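(* Let $\mathcal{D}$ be a domain, $G<\mathrm{IET}(\mathcal{D})$ a subgroup, and $a\in G$ a stable element with irreducible components $I_1,\dots,I_n$. Assume that for all $g\in G$, $gag^{-1}$ commutes with $a$. Then for each $i\leq n$, the collection $\{g(I_i): g\in G\}$ is a finite collection of pairwise disjoint subdomains (i.e. for $g,h\in G$, either $g(I_i)=h(I_i)$ or $g(I_i)\cap h(I_i)=\emptyset$).
   Context: A domain is a non-empty disjoint union of finitely many oriented circles and oriented half-open bounded intervals closed on the left; a subdomain is a subset that is itself a domain. $\mathrm{IET}(\mathcal{D})$ is the group of bijections of $\mathcal{D}$ that are orientation-preserving piecewise isometries, left-continuous, with finitely many discontinuity points. For a finitely generated $H<\mathrm{IET}(\mathcal{D})$: $H$ is irreducible on an $H$-invariant subdomain $J$ if every $H$-orbit in $J$ is dense in $J$; the irreducible components of $H$ are the members of the unique finite collection of pairwise disjoint $H$-invariant subdomains on each of which $H$ is irreducible and such that $H$ acts as a finite group on the complement of their union. $H$ is stable if every subdomain invariant under a finite index subgroup of $H$ is $H$-invariant. An element $a$ is stable if $\langle a\rangle$ is stable, and its irreducible components are those of $\langle a\rangle$. *)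

From Stdlib Require Import Reals List.
Open Scope R_scope.

(* A domain: finitely many (ncomp >= 1) components; component k has length
   len k > 0 and is a circle R/(len k)Z if circ k = true, otherwise the
   half-open interval [0, len k).  Points are (k, x) with 0 <= x < len k;
   on a circle the coordinate x is taken modulo len k. *)
Record domain := {
  ncomp : nat;
  len : nat -> R;
  circ : nat -> bool;
  ncomp_pos : (0 < ncomp)%nat;
  len_pos : forall k, (k < ncomp)%nat -> 0 < len k }.

Definition inD (D : domain) (p : nat * R) : Prop :=
  (fst p < ncomp D)%nat /\ 0 <= snd p < len D (fst p).

Definition pt (D : domain) := { p : nat * R | inD D p }.

Definition comp {D} (p : pt D) : nat := fst (proj1_sig p).
Definition coord {D} (p : pt D) : R := snd (proj1_sig p).

Definition wrap (D : domain) (k : nat) (x : R) : R :=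
  if circ D k then x - len D k * IZR (Int_part (x / len D k)) else x.

Definition cdist (D : domain) (k : nat) (x y : R) : R :=
  if circ D k then Rmin (Rabs (x - y)) (len D k - Rabs (x - y)) else Rabs (x - y).

Definition bij {D} (f : pt D -> pt D) : Prop :=
  exists g : pt D -> pt D, (forall p, g (f p) = p) /\ (forall p, f (g p) = p).

Record piece := { src : nat; lo : R; hi : R; tgt : nat; shift : R }.

Definition in_piece {D} (pc : piece) (p : pt D) : Prop :=
  comp p = src pc /\ lo pc <= coord p < hi pc.

(* IET(D): bijections that are orientation-preserving piecewise isometries,
   continuous on finitely many left-closed pieces (hence finitely many
   discontinuity points): on each piece [c,d) the map is a translation. *)
Definition is_IET {D} (f : pt D -> pt D) : Prop :=
  bij f /\
  exists pieces : list piece,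
    (forall p : pt D, exists pc, In pc pieces /\ in_piece pc p) /\
    (forall pc, In pc pieces -> forall p, in_piece pc p ->
       comp (f p) = tgt pc /\ coord (f p) = wrap D (tgt pc) (coord p + shift pc)).

Definition pset D := pt D -> Prop.
Definition seteq {D} (A B : pset D) : Prop := forall p, A p <-> B p.
Definition disjoint {D} (A B : pset D) : Prop := forall p, ~ (A p /\ B p).
Definition image {D} (g : pt D -> pt D) (A : pset D) : pset D :=
  fun p => exists q, A q /\ p = g q.

Definition subdomain {D} (J : pset D) : Prop :=
  (exists p, J p) /\
  exists l : list (nat * R * R),
    forall p, J p <-> exists kcd, In kcd l /\
      comp p = fst (fst kcd) /\ snd (fst kcd) <= coord p < snd kcd.

Definition is_subgroup {D} (H : (pt D -> pt D) -> Prop) : Prop :=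
  H (fun p => p) /\
  (forall g h, H g -> H h -> H (fun p => g (h p))) /\
  (forall g, H g -> exists h, H h /\ (forall p, h (g p) = p) /\ (forall p, g (h p) = p)).

Definition subgroup_of {D} (K H : (pt D -> pt D) -> Prop) : Prop :=
  is_subgroup K /\ forall k, K k -> H k.

Definition finite_index {D} (K H : (pt D -> pt D) -> Prop) : Prop :=
  exists l : list (pt D -> pt D),
    (forall g, In g l -> H g) /\
    forall h, H h -> exists g k, In g l /\ K k /\ forall p, h p = g (k p).

Definition cyclic {D} (a : pt D -> pt D) : (pt D -> pt D) -> Prop :=
  fun g => forall H, is_subgroup H -> H a -> H g.

Definition invariant {D} (H : (pt D -> pt D) -> Prop) (J : pset D) : Prop :=
  forall h, H h -> seteq (image h J) J.

Definition dense_in {D} (A J : pset D) : Prop :=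
  forall q, J q -> forall eps, 0 < eps ->
    exists r, A r /\ comp r = comp q /\ cdist D (comp q) (coord r) (coord q) < eps.

Definition orbit {D} (H : (pt D -> pt D) -> Prop) (p : pt D) : pset D :=
  fun r => exists h, H h /\ r = h p.

Definition irreducible_on {D} (H : (pt D -> pt D) -> Prop) (J : pset D) : Prop :=
  invariant H J /\ forall p, J p -> dense_in (orbit H p) J.

Definition stable {D} (H : (pt D -> pt D) -> Prop) : Prop :=
  forall K, subgroup_of K H -> finite_index K H ->
    forall J, subdomain J -> invariant K J -> invariant H J.

Definition irreducible_components {D} (H : (pt D -> pt D) -> Prop)
    (Is : list (pset D)) : Prop :=
  (forall I, In I Is -> subdomain I /\ invariant H I /\ irreducible_on H I) /\
  (forall i j, (i < length Is)%nat -> (j < length Is)%nat -> i <> j ->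
     disjoint (nth i Is (fun _ => False)) (nth j Is (fun _ => False))) /\
  (* H acts as a finite group on the complement of the union *)
  (exists l : list (pt D -> pt D),
     forall h, H h -> exists f, In f l /\
       forall p, (forall I, In I Is -> ~ I p) -> h p = f p).

(* Let [I] be an irreducible component of [a] and [f] an element of [G].  By hypothesis
   [c = f^-1 a f] commutes with [a], so [c] permutes the components of [a] and some power [c^N]
   fixes [I]; equivalently [a^N] fixes [f I].  Stability of [a] upgrades this to invariance of
   [f I] under [a], and irreducibility then forces two images [g I], [h I] that meet to coincide.
   Distinct images are therefore disjoint, and since IETs preserve Lebesgue measure they all have
   the positive measure of [I]; only finitely many of them fit in [D]. *)

From Stdlib Require Import Reals List Lra Lia.
From Stdlib Require Import Classical FunctionalExtensionality PropExtensionality ProofIrrelevance.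
From Stdlib Require FinFun.
From mathcomp Require all_boot all_order all_algebra all_classical all_reals all_analysis Rstruct.

(** * Lebesgue measure of finite unions of intervals *)

Lemma Rmax_plus_r a b s : Rmax (a + s) (b + s) = Rmax a b + s.
Proof. unfold Rmax; destruct (Rle_dec (a + s) (b + s)), (Rle_dec a b); lra. Qed.

Lemma Rmin_plus_r a b s : Rmin (a + s) (b + s) = Rmin a b + s.
Proof. unfold Rmin; destruct (Rle_dec (a + s) (b + s)), (Rle_dec a b); lra. Qed.

Module Lebesgue.
Import mathcomp.boot.all_boot mathcomp.order.all_order mathcomp.algebra.all_algebra.
Import mathcomp.classical.all_classical mathcomp.reals.all_reals.
Import mathcomp.analysis.all_analysis mathcomp.reals_stdlib.Rstruct.
Import Order.TTheory GRing.Theory Num.Theory.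
Local Open Scope classical_set_scope.
Local Open Scope ring_scope.

Definition lmeas (A : R -> Prop) : R :=
  fine (lebesgue_measure (A : set (measurableTypeR R))).

Definition itv (cd : R * R) : R -> Prop := fun x => Rle cd.1 x /\ Rlt x cd.2.

Definition itvs (l : list (R * R)) : R -> Prop :=
  fun x => exists cd, List.In cd l /\ itv cd x.

Definition itv_meet (cd cd' : R * R) : R * R := (Rmax cd.1 cd'.1, Rmin cd.2 cd'.2).

Definition itv_shift (s : R) (cd : R * R) : R * R := (Rplus cd.1 s, Rplus cd.2 s).

Lemma lmeas_ext (A B : R -> Prop) : (forall x, A x <-> B x) -> lmeas A = lmeas B.
Proof. by move=> AB; congr lmeas; apply/funext => x; apply/propext. Qed.

Lemma itvE cd : itv cd = [set` `[cd.1, cd.2[%R].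
Proof.
apply/funext => x; apply/propext; rewrite /itv /= in_itv /=; split.
- by move=> [/RleP -> /RltP ->].
- by move/andP=> [/RleP ? /RltP ?].
Qed.

Lemma itvs_nil : itvs nil = set0.
Proof. by apply/funext => x; apply/propext; split => [[cd [[]]]|]. Qed.

Lemma itvs_cons cd l : itvs (cd :: l) = itv cd `|` itvs l.
Proof.
apply/funext => x; apply/propext; split.
- by move=> [cd' [[<-|Hin] H]]; [left | right; exists cd'].
- move=> [H|[cd' [Hin H]]]; [exists cd | exists cd']; split => //; [left | right] => //.
Qed.

Lemma itvs_app l1 l2 : itvs (l1 ++ l2) = itvs l1 `|` itvs l2.
Proof.
apply/funext => x; apply/propext; split.
- by move=> [cd [Hin H]]; case: (List.in_app_or _ _ _ Hin) => ?; [left | right]; exists cd.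
- by move=> [[cd [H H']]|[cd [H H']]]; exists cd; split => //; apply: List.in_or_app; tauto.
Qed.

Lemma in_itvs_app l1 l2 x : itvs (l1 ++ l2) x <-> itvs l1 x \/ itvs l2 x.
Proof. by rewrite itvs_app. Qed.

Lemma itv_meet_itvs cd l : itv cd `&` itvs l = itvs (List.map (itv_meet cd) l).
Proof.
apply/funext => x; apply/propext; rewrite /itv; split.
- move=> [[H1 H2] [cd' [Hin [H3 H4]]]]; exists (itv_meet cd cd'); split.
  + exact: List.in_map.
  + by rewrite /itv /=; split; [apply: Rmax_lub | apply: Rmin_glb_lt].
- move=> [_ [/List.in_map_iff [cd' [<- Hin]] [/= H3 H4]]].
  have := Rmax_l cd.1 cd'.1; have := Rmax_r cd.1 cd'.1.
  have := Rmin_l cd.2 cd'.2; have := Rmin_r cd.2 cd'.2.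
  move=> *; split; [|exists cd'; split => //]; split; lra.
Qed.

Lemma itv_measurable cd : measurable (itv cd : set (measurableTypeR R)).
Proof. by rewrite itvE; exact: measurable_itv. Qed.

Lemma itvs_measurable l : measurable (itvs l : set (measurableTypeR R)).
Proof.
elim: l => [|cd l IH]; first by rewrite itvs_nil; exact: measurable0.
by rewrite itvs_cons; apply: measurableU => //; exact: itv_measurable.
Qed.

Lemma lebesgue_itv cd :
  lebesgue_measure (itv cd : set (measurableTypeR R)) =
  (if cd.1 < cd.2 then (cd.2 - cd.1)%:E else 0%E).
Proof. by rewrite itvE lebesgue_measure_itv /=; case: ifP => //= _; rewrite EFinB. Qed.

Lemma lebesgue_itvs_fin_num l :
  lebesgue_measure (itvs l : set (measurableTypeR R)) \is a fin_num.
Proof.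
rewrite ge0_fin_numE ?measure_ge0 //.
elim: l => [|cd l IH]; first by rewrite itvs_nil measure0 ltry.
rewrite itvs_cons; apply: (le_lt_trans (measureU2 _ _ _));
  [exact: itv_measurable | exact: itvs_measurable |].
rewrite lte_add_pinfty //.
change (lebesgue_measure (itv cd : set (measurableTypeR R)) < +oo)%E.
by rewrite lebesgue_itv; case: ifP => _; exact: ltry.
Qed.

Lemma lmeas_itvs_nil : lmeas (itvs nil) = 0%coqR.
Proof. by rewrite /lmeas itvs_nil measure0. Qed.

Lemma lmeas_itvs_single c d : Rlt c d -> lmeas (itvs ((c, d) :: nil)) = Rminus d c.
Proof. by move=> /RltP cd; rewrite /lmeas itvs_cons itvs_nil setU0 lebesgue_itv /= cd. Qed.

Lemma lmeas_itvs_le l1 l2 :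
  (forall x, itvs l1 x -> itvs l2 x) -> Rle (lmeas (itvs l1)) (lmeas (itvs l2)).
Proof.
move=> sub; apply/RleP; apply: fine_le; rewrite ?lebesgue_itvs_fin_num //.
by apply: le_measure; rewrite ?inE; try exact: itvs_measurable.
Qed.

Lemma lmeas_itvs_app_disjoint l1 l2 : (forall x, ~ (itvs l1 x /\ itvs l2 x)) ->
  lmeas (itvs (l1 ++ l2)) = Rplus (lmeas (itvs l1)) (lmeas (itvs l2)).
Proof.
move=> disj; rewrite /lmeas itvs_app measureU; try exact: itvs_measurable.
- by rewrite fineD // lebesgue_itvs_fin_num.
- by apply/funext => x; apply/propext; split => // -[? ?]; apply: (disj x).
Qed.

Lemma lmeas_itvs_cons cd l : lmeas (itvs (cd :: l)) =
  Rminus (Rplus (lmeas (itv cd)) (lmeas (itvs l))) (lmeas (itvs (List.map (itv_meet cd) l))).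
Proof.
have cd_fin : lebesgue_measure (itv cd : set (measurableTypeR R)) \is a fin_num.
  by rewrite lebesgue_itv; case: ifP.
rewrite /lmeas itvs_cons measureUfinr; try exact: itv_measurable; try exact: itvs_measurable.
  2: by rewrite -ge0_fin_numE ?measure_ge0 // lebesgue_itvs_fin_num.
rewrite itv_meet_itvs fineB ?fineD ?lebesgue_itvs_fin_num //.
by rewrite fin_numD cd_fin lebesgue_itvs_fin_num.
Qed.

Lemma lmeas_itv_shift s cd : lmeas (itv (itv_shift s cd)) = lmeas (itv cd).
Proof.
rewrite /lmeas !lebesgue_itv /=.
have -> : (Rplus cd.1 s < Rplus cd.2 s) = (cd.1 < cd.2) by rewrite !RplusE ltrD2r.
case: ifP => // _; congr (fine (EFin _)); rewrite !RplusE.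
by rewrite opprD addrACA subrr addr0.
Qed.

Lemma itv_meet_shift s cd l :
  List.map (itv_shift s) (List.map (itv_meet cd) l) =
  List.map (itv_meet (itv_shift s cd)) (List.map (itv_shift s) l).
Proof.
elim: l => [|cd' l IH] //=; rewrite IH; congr (_ :: _).
by rewrite /itv_shift /itv_meet /= Rmax_plus_r Rmin_plus_r.
Qed.

Lemma lmeas_itvs_shift s l : lmeas (itvs (List.map (itv_shift s) l)) = lmeas (itvs l).
Proof.
move: {2}(List.length l) (erefl (List.length l)) => n; elim: n l s => [|n IH] [|cd l] s //= [len_l].
by rewrite !lmeas_itvs_cons IH // -itv_meet_shift IH ?List.length_map // lmeas_itv_shift.
Qed.

End Lebesgue.

(** * Points and subdomains *)

Section Points.
Variable D : domain.

Lemma pt_eq (p q : pt D) : comp p = comp q -> coord p = coord q -> p = q.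
Proof.
  destruct p as [[k x] Hp], q as [[k' x'] Hq]; unfold comp, coord; simpl; intros <- <-.
  f_equal; apply proof_irrelevance.
Qed.

Definition mkpt (k : nat) (x : R) (Hk : (k < ncomp D)%nat) (Hx : 0 <= x < len D k) : pt D :=
  exist _ (k, x) (conj Hk Hx).

Lemma comp_mkpt k x Hk Hx : comp (mkpt k x Hk Hx) = k.
Proof. reflexivity. Qed.

Lemma coord_mkpt k x Hk Hx : coord (mkpt k x Hk Hx) = x.
Proof. reflexivity. Qed.

Lemma comp_lt (p : pt D) : (comp p < ncomp D)%nat.
Proof. exact (proj1 (proj2_sig p)). Qed.

Lemma coord_bound (p : pt D) : 0 <= coord p < len D (comp p).
Proof. exact (proj2 (proj2_sig p)). Qed.

Lemma pset_ext (A B : pset D) : seteq A B -> A = B.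
Proof. intros H; extensionality p; apply propositional_extensionality, H. Qed.

Definition in_arcs (l : list (nat * R * R)) (p : pt D) : Prop :=
  exists kcd, In kcd l /\ comp p = fst (fst kcd) /\ snd (fst kcd) <= coord p < snd kcd.

Definition arc_union (S : pset D) : Prop := exists l, forall p, S p <-> in_arcs l p.

Lemma arc_union_right_nbhd (S : pset D) p : arc_union S -> S p ->
  exists d, 0 < d /\ coord p + d <= len D (comp p) /\
    forall q, comp q = comp p -> coord p <= coord q < coord p + d -> S q.
Proof.
  intros [l Hl] Sp. destruct (proj1 (Hl p) Sp) as [[[k c] e] [Hin [Hk Hc]]]; simpl in *.
  pose proof (coord_bound p).
  pose proof (Rmin_l (e - coord p) (len D (comp p) - coord p)).
  pose proof (Rmin_r (e - coord p) (len D (comp p) - coord p)).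
  exists (Rmin (e - coord p) (len D (comp p) - coord p)). split; [|split].
  - apply Rmin_glb_lt; lra.
  - lra.
  - intros q Hq Hqx. apply Hl. exists (k, c, e); simpl. repeat split; [assumption|congruence|lra|lra].
Qed.

Lemma cdist_lt_Rabs k x y eps : cdist D k x y < eps -> 0 <= x < len D k ->
  eps <= y <= len D k - eps -> Rabs (x - y) < eps.
Proof.
  unfold cdist; destruct (circ D k); [|tauto].
  unfold Rmin; destruct (Rle_dec _ _); [tauto|].
  unfold Rabs; destruct (Rcase_abs (x - y)); lra.
Qed.

Lemma dense_near (A S : pset D) q eps : dense_in A S -> S q -> 0 < eps ->
  eps <= coord q <= len D (comp q) - eps ->
  exists r, A r /\ comp r = comp q /\ coord q - eps < coord r < coord q + eps.
Proof.
  intros Hd Sq Heps Hq. destruct (Hd q Sq eps Heps) as [r [Ar [Hc Hr]]].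
  exists r. split; [exact Ar|split; [exact Hc|]].
  pose proof (coord_bound r) as Hb. rewrite Hc in Hb.
  pose proof (cdist_lt_Rabs _ _ _ _ Hr Hb Hq) as Habs.
  unfold Rabs in Habs; destruct (Rcase_abs _); lra.
Qed.

Lemma gap_avoiding (xs : list R) u v : u < v -> exists u' v', u <= u' < v' /\ v' <= v /\
  forall x, In x xs -> ~ (u' < x < v').
Proof.
  intros Huv. induction xs as [|x xs IH].
  - exists u, v. repeat split; try lra. intros x [].
  - destruct IH as [u' [v' [H1 [H2 H3]]]].
    destruct (classic (u' < x < v')) as [Hx|Hx].
    + exists u', x. repeat split; try lra. intros y [<-|Hy] Hy'; [lra|]. apply (H3 y Hy); lra.
    + exists u', v'. repeat split; try lra. intros y [<-|Hy]; [exact Hx|exact (H3 y Hy)].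
Qed.

Lemma finite_not_dense (F : list (pt D)) (S : pset D) :
  arc_union S -> (exists p, S p) -> ~ dense_in (fun r => In r F) S.
Proof.
  intros HS [p Sp] Hd.
  destruct (arc_union_right_nbhd S p HS Sp) as [d [Hd0 [Hdl HSd]]].
  pose proof (coord_bound p).
  destruct (gap_avoiding (map coord F) (coord p) (coord p + d)) as [u [v [Hu [Hv Hgap]]]]; [lra|].
  assert (Hx : 0 <= (u + v) / 2 < len D (comp p)) by lra.
  set (q := mkpt (comp p) ((u + v) / 2) (comp_lt p) Hx).
  assert (Sq : S q) by (apply HSd; unfold q; rewrite ?comp_mkpt, ?coord_mkpt; [reflexivity|lra]).
  destruct (dense_near _ S q ((v - u) / 2) Hd Sq) as [r [Fr [_ Hr]]];
    unfold q in *; rewrite ?comp_mkpt, ?coord_mkpt in *; [lra|lra|].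
  apply (Hgap (coord r)); [apply in_map, Fr|lra].
Qed.

Lemma irreducible_absorbed (H : (pt D -> pt D) -> Prop) (I J : pset D) p :
  (forall h, H h -> forall x y, h x = h y -> x = y) ->
  irreducible_on H I -> arc_union I -> invariant H J -> arc_union J ->
  I p -> J p -> forall q, I q -> J q.
Proof.
  intros Hinj [_ Hdense] HI HJinv HJ Ip Jp q Iq.
  destruct (arc_union_right_nbhd J p HJ Jp) as [d1 [Hd1 [_ HJ1]]].
  destruct (arc_union_right_nbhd I p HI Ip) as [d2 [Hd2 [Hl2 HI2]]].
  set (d := Rmin d1 d2).
  assert (0 < d) by (apply Rmin_glb_lt; lra).
  assert (d <= d1) by apply Rmin_l.
  assert (d <= d2) by apply Rmin_r.
  pose proof (coord_bound p).
  assert (Hx : 0 <= coord p + d / 2 < len D (comp p)) by lra.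
  set (p' := mkpt (comp p) (coord p + d / 2) (comp_lt p) Hx).
  assert (Ip' : I p') by (apply HI2; unfold p'; rewrite ?comp_mkpt, ?coord_mkpt; [reflexivity|lra]).
  destruct (dense_near _ I p' (d / 2) (Hdense q Iq) Ip') as [r [[h [Hh ->]] [Hc Hr]]];
    unfold p' in *; rewrite ?comp_mkpt, ?coord_mkpt in *; [lra|lra|].
  assert (Jhq : J (h q)) by (apply HJ1; [exact Hc|lra]).
  destruct (proj2 (HJinv h Hh (h q)) Jhq) as [q' [Jq' Heq]].
  rewrite (Hinj h Hh _ _ Heq); exact Jq'.
Qed.

End Points.

(** * Cyclic groups and irreducible components *)

Lemma pigeonhole_nat {A : Type} (l : list A) (F : nat -> A) :
  (forall t, In (F t) l) -> exists t1 t2, (t1 < t2)%nat /\ F t1 = F t2.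
Proof.
  intros HF. apply NNPP; intros Hno.
  assert (Hnd : NoDup (map F (seq 0 (S (length l))))).
  { apply FinFun.Injective_map_NoDup_in; [|apply seq_NoDup].
    intros i j _ _ Hij. destruct (Nat.lt_total i j) as [Hlt|[Heq|Hgt]]; [|exact Heq|];
      exfalso; apply Hno; [exists i, j|exists j, i]; auto. }
  assert (Hincl : incl (map F (seq 0 (S (length l)))) l).
  { intros y Hy. apply in_map_iff in Hy. destruct Hy as [t [<- _]]. apply HF. }
  pose proof (NoDup_incl_length Hnd Hincl) as Hlen.
  rewrite length_map, length_seq in Hlen. lia.
Qed.

Lemma iter_mul {A : Type} (f : A -> A) m n x :
  Nat.iter (m * n) f x = Nat.iter n (Nat.iter m f) x.
Proof.
  induction n as [|n IH]; [now rewrite Nat.mul_0_r|].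
  now rewrite Nat.mul_succ_r, Nat.add_comm, Nat.iter_add, IH.
Qed.

Section Bijections.
Variable D : domain.

Definition are_inverse (f g : pt D -> pt D) : Prop :=
  (forall p, g (f p) = p) /\ (forall p, f (g p) = p).

Lemma are_inverse_bij f g : are_inverse f g -> bij f.
Proof. intros H; exists g; exact H. Qed.

Lemma bij_inj (f : pt D -> pt D) : bij f -> forall x y, f x = f y -> x = y.
Proof. intros [g [H1 _]] x y H. rewrite <- (H1 x), <- (H1 y), H; reflexivity. Qed.

Lemma bij_subgroup : is_subgroup (@bij D).
Proof.
  split; [|split].
  - exists (fun p => p); split; reflexivity.
  - intros g h [gi [G1 G2]] [hi [H1 H2]]. exists (fun p => hi (gi p)).
    split; intros p; [rewrite G1; apply H1|rewrite H2; apply G2].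
  - intros g [gi [G1 G2]]. exists gi; repeat split; try assumption. exists g; split; assumption.
Qed.

Lemma subgroup_inverse (H : (pt D -> pt D) -> Prop) h hi :
  is_subgroup H -> H h -> are_inverse h hi -> H hi.
Proof.
  intros [_ [_ Hinv]] Hh [E1 E2]. destruct (Hinv h Hh) as [h' [Hh' [F1 _]]].
  replace hi with h'; [exact Hh'|]. extensionality p.
  rewrite <- (F1 (hi p)), E2; reflexivity.
Qed.

Lemma image_comp (g h : pt D -> pt D) S : image (fun p => g (h p)) S = image g (image h S).
Proof.
  apply pset_ext; intros p; split.
  - intros [q [Sq ->]]. exists (h q); split; [exists q; split|]; auto.
  - intros [q [[q' [Sq' ->]] ->]]. exists q'; split; auto.
Qed.

Lemma image_id S : image (fun p : pt D => p) S = S.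
Proof. apply pset_ext; intros p; split; [intros [q [Sq ->]]; exact Sq|intros Sp; exists p; auto]. Qed.

Lemma image_ext (g h : pt D -> pt D) S : (forall p, g p = h p) -> image g S = image h S.
Proof. intros H. replace g with h; [reflexivity|]. extensionality p; symmetry; apply H. Qed.

Lemma image_inverse (f g : pt D -> pt D) S : are_inverse f g -> image g (image f S) = S.
Proof. intros [H1 _]. rewrite <- image_comp, (image_ext _ (fun p => p) _ H1). apply image_id. Qed.

Lemma image_inj (f : pt D -> pt D) A B : bij f -> image f A = image f B -> A = B.
Proof.
  intros [g Hfg] H.
  rewrite <- (image_inverse f g A Hfg), <- (image_inverse f g B Hfg), H; reflexivity.
Qed.

Lemma iter_are_inverse f g n : are_inverse f g -> are_inverse (Nat.iter n f) (Nat.iter n g).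
Proof.
  intros [H1 H2]. induction n as [|n [IH1 IH2]]; [split; reflexivity|].
  split; intros p; simpl.
  - rewrite <- Nat.iter_swap, H1; apply IH1.
  - rewrite <- Nat.iter_swap, H2; apply IH2.
Qed.

Lemma iter_conjugate f fi h n : are_inverse f fi ->
  forall p, Nat.iter n (fun q => fi (h (f q))) p = fi (Nat.iter n h (f p)).
Proof.
  intros [F1 F2] p. induction n as [|n IH]; simpl; [symmetry; apply F1|].
  rewrite IH, F2; reflexivity.
Qed.

Lemma iter_bij (f : pt D -> pt D) n : bij f -> bij (Nat.iter n f).
Proof. intros [g Hfg]. exists (Nat.iter n g). apply iter_are_inverse, Hfg. Qed.

Lemma image_iter_fixed f (J : pset D) n : image f J = J -> image (Nat.iter n f) J = J.
Proof.
  intros H. induction n as [|n IH]; [apply image_id|].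
  change (image (fun p => f (Nat.iter n f p)) J = J). rewrite image_comp, IH; exact H.
Qed.

End Bijections.

Section Cyclic.
Variable D : domain.
Variable a : pt D -> pt D.
Hypothesis bij_a : bij a.

Lemma cyclic_gen : cyclic a a.
Proof. intros H _ Ha; exact Ha. Qed.

Lemma cyclic_id : cyclic a (fun p => p).
Proof. intros H [Hid _] _; exact Hid. Qed.

Lemma cyclic_comp g h : cyclic a g -> cyclic a h -> cyclic a (fun p => g (h p)).
Proof. intros Hg Hh H HH Ha. apply (proj1 (proj2 HH)); [apply Hg|apply Hh]; assumption. Qed.

Lemma cyclic_iter h n : cyclic a h -> cyclic a (Nat.iter n h).
Proof. intros Hh; induction n as [|n IH]; [apply cyclic_id|exact (cyclic_comp h _ Hh IH)]. Qed.

Lemma cyclic_bij h : cyclic a h -> bij h.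
Proof. intros Hh; exact (Hh _ (bij_subgroup D) bij_a). Qed.

Lemma cyclic_inj h : cyclic a h -> forall x y, h x = h y -> x = y.
Proof. intros Hh; apply bij_inj, cyclic_bij, Hh. Qed.

Lemma cyclic_inverse h hi : cyclic a h -> are_inverse D h hi -> cyclic a hi.
Proof. intros Hh Hi H HH Ha. exact (subgroup_inverse D H h hi HH (Hh H HH Ha) Hi). Qed.

Lemma cyclic_subgroup : is_subgroup (cyclic a).
Proof.
  split; [exact cyclic_id|split; [exact cyclic_comp|]].
  intros g Hg. destruct (cyclic_bij g Hg) as [gi Hgi].
  exists gi; split; [exact (cyclic_inverse g gi Hg Hgi)|apply Hgi].
Qed.

Lemma cyclic_commute (c : pt D -> pt D) : (forall p, a (c p) = c (a p)) ->
  forall h, cyclic a h -> forall p, h (c p) = c (h p).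
Proof.
  intros Hac h Hh.
  set (C := fun h : pt D -> pt D => bij h /\ forall p, h (c p) = c (h p)).
  assert (HC : is_subgroup C).
  { unfold C; split; [|split].
    - split; [exact (proj1 (bij_subgroup D))|reflexivity].
    - intros g k [Bg Cg] [Bk Ck]. split; [apply (bij_subgroup D); assumption|].
      intros p; rewrite Ck, Cg; reflexivity.
    - intros g [[gi [G1 G2]] Cg]. exists gi; split; [|split; assumption].
      split; [exists g; split; assumption|].
      intros p. rewrite <- (G1 (gi (c p))), <- (G1 (c (gi p))), G2, Cg, G2; reflexivity. }
  exact (proj2 (Hh C HC (conj bij_a Hac))).
Qed.

Lemma commute_inverse (c ci : pt D -> pt D) : are_inverse D c ci ->
  (forall p, a (c p) = c (a p)) -> forall p, a (ci p) = ci (a p).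
Proof. intros [C1 C2] Hc p. rewrite <- (C1 (a (ci p))), <- Hc, C2; reflexivity. Qed.

Lemma invariant_image_commute (c : pt D -> pt D) (I : pset D) :
  (forall p, a (c p) = c (a p)) -> invariant (cyclic a) I -> invariant (cyclic a) (image c I).
Proof.
  intros Hc HI h Hh p. pose proof (cyclic_commute c Hc h Hh) as Hhc. split.
  - intros [q [[q' [Iq' ->]] ->]]. rewrite Hhc. exists (h q'); split; [|reflexivity].
    apply (HI h Hh). exists q'; split; auto.
  - intros [q [Iq ->]]. destruct (proj2 (HI h Hh q) Iq) as [q' [Iq' ->]].
    rewrite <- Hhc. exists (c q'); split; [exists q'; split|]; auto.
Qed.

Section Components.
Variable Is : list (pset D).
Hypothesis Is_components : irreducible_components (cyclic a) Is.

Lemma component_subdomain I : In I Is -> subdomain I.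
Proof. intros HI; apply (proj1 Is_components I HI). Qed.

Lemma component_arc_union I : In I Is -> arc_union D I.
Proof. intros HI; apply (component_subdomain I HI). Qed.

Lemma component_irreducible I : In I Is -> irreducible_on (cyclic a) I.
Proof. intros HI; apply (proj1 Is_components I HI). Qed.

Lemma component_absorbed (I J : pset D) p : In I Is ->
  invariant (cyclic a) J -> arc_union D J -> I p -> J p -> forall q, I q -> J q.
Proof.
  intros HI.
  exact (irreducible_absorbed D _ I J p cyclic_inj (component_irreducible I HI) (component_arc_union I HI)).
Qed.

Lemma invariant_images_meeting_eq (F Fi : pt D -> pt D) I1 I2 :
  are_inverse D F Fi -> In I1 Is -> In I2 Is ->
  arc_union D (image F I1) -> arc_union D (image Fi I2) ->
  invariant (cyclic a) (image F I1) -> invariant (cyclic a) (image Fi I2) ->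
  (exists p, image F I1 p /\ I2 p) -> image F I1 = I2.
Proof.
  intros [E1 E2] H1 H2 A1 A2 V1 V2 [p [Jp I2p]].
  pose proof (component_absorbed I2 _ p H2 V1 A1 I2p Jp) as I2_sub.
  destruct Jp as [q [I1q ->]].
  assert (Hq : image Fi I2 q) by (exists (F q); split; [exact I2p|symmetry; apply E1]).
  pose proof (component_absorbed I1 _ q H1 V2 A2 I1q Hq) as I1_sub.
  apply pset_ext; intros x; split.
  - intros [y [I1y ->]]. destruct (I1_sub y I1y) as [z [I2z ->]]. rewrite E2; exact I2z.
  - apply I2_sub.
Qed.

(* if [c I1] met no component, the [a]-orbits in it, hence in [I1], would be finite *)
Lemma commuting_map_permutes_components (c ci : pt D -> pt D) :
  are_inverse D c ci -> (forall p, a (c p) = c (a p)) ->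
  (forall I, In I Is -> arc_union D (image c I)) -> (forall I, In I Is -> arc_union D (image ci I)) ->
  forall I1, In I1 Is -> In (image c I1) Is.
Proof.
  intros Hinv Hc Ac Aci I1 H1.
  destruct (classic (exists I2, In I2 Is /\ exists p, image c I1 p /\ I2 p)) as [[I2 [H2 Hp]]|Hno].
  - replace (image c I1) with I2; [exact H2|]. symmetry.
    apply (invariant_images_meeting_eq c ci); auto.
    + apply invariant_image_commute; [exact Hc|apply component_irreducible, H1].
    + apply invariant_image_commute; [exact (commute_inverse c ci Hinv Hc)|apply component_irreducible, H2].
  - exfalso. destruct (proj2 (proj2 Is_components)) as [l Hl].
    destruct (component_subdomain I1 H1) as [[q Iq] AI1].
    apply (finite_not_dense D (map (fun f => ci (f (c q))) l) I1 AI1 (ex_intro _ q Iq)).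
    intros x Ix eps Heps.
    destruct (proj2 (component_irreducible I1 H1) q Iq x Ix eps Heps) as [r [[h [Hh ->]] Hr]].
    exists (h q); split; [|exact Hr].
    destruct (Hl h Hh) as [f [Hf Hhf]]. apply in_map_iff. exists f; split; [|exact Hf].
    rewrite <- Hhf.
    + rewrite (cyclic_commute c Hc h Hh). apply (proj1 Hinv).
    + intros I HI HIc. apply Hno. exists I; split; [exact HI|]. exists (c q); split; [exists q|]; auto.
Qed.

Lemma commuting_map_power_fixes_component (c ci : pt D -> pt D) :
  are_inverse D c ci -> (forall p, a (c p) = c (a p)) ->
  (forall I, In I Is -> arc_union D (image c I)) -> (forall I, In I Is -> arc_union D (image ci I)) ->
  forall I, In I Is -> exists N, (1 <= N)%nat /\ image (Nat.iter N c) I = I.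
Proof.
  intros Hinv Hc Ac Aci I HI.
  assert (Hin : forall t, In (image (Nat.iter t c) I) Is).
  { induction t as [|t IH]; [rewrite image_id; exact HI|].
    change (In (image (fun p => c (Nat.iter t c p)) I) Is). rewrite image_comp.
    apply (commuting_map_permutes_components c ci); assumption. }
  destruct (pigeonhole_nat Is _ Hin) as [t1 [t2 [Hlt Heq]]].
  exists (t2 - t1)%nat; split; [lia|].
  apply (image_inj D (Nat.iter t1 c)); [apply iter_bij; exists ci; exact Hinv|].
  rewrite <- image_comp, Heq. apply image_ext; intros p.
  rewrite <- Nat.iter_add. f_equal; lia.
Qed.

End Components.
End Cyclic.

(** * Stability *)

Definition stabilizer {D} (H : (pt D -> pt D) -> Prop) (J : pset D) : (pt D -> pt D) -> Prop :=
  fun h => H h /\ image h J = J.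

Lemma stabilizer_subgroup {D} (H : (pt D -> pt D) -> Prop) (J : pset D) :
  is_subgroup H -> subgroup_of (stabilizer H J) H.
Proof.
  intros HH. split; [|intros h [Hh _]; exact Hh].
  split; [|split].
  - split; [apply HH|apply image_id].
  - intros g h [Hg Eg] [Hh Eh]. split; [apply HH; assumption|].
    rewrite image_comp, Eh; exact Eg.
  - intros g [Hg Eg]. destruct (proj2 (proj2 HH) g Hg) as [gi [Hgi Hinv]].
    exists gi. split; [|exact Hinv]. split; [exact Hgi|].
    rewrite <- Eg at 1. apply image_inverse, Hinv.
Qed.

Section Stability.
Variable D : domain.
Variables a ai : pt D -> pt D.
Hypothesis a_ai : are_inverse D a ai.

Lemma cyclic_powers h : cyclic a h -> exists n m, forall p, h p = Nat.iter n a (Nat.iter m ai p).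
Proof.
  intros Hh. pose proof (iter_are_inverse D a ai) as Hpow.
  assert (Hcomm : forall n m p, Nat.iter m ai (Nat.iter n a p) = Nat.iter n a (Nat.iter m ai p)).
  { intros n m p. apply Nat.iter_swap_gen. intros q. symmetry. apply Nat.iter_swap_gen.
    intros r. rewrite (proj1 a_ai), (proj2 a_ai); reflexivity. }
  apply Hh; [|exists 1%nat, 0%nat; reflexivity].
  split; [|split].
  - exists 0%nat, 0%nat; reflexivity.
  - intros g k [n1 [m1 Hg]] [n2 [m2 Hk]]. exists (n1 + n2)%nat, (m1 + m2)%nat. intros p.
    rewrite Hg, Hk, Hcomm, !Nat.iter_add; reflexivity.
  - intros g [n [m Hg]]. exists (fun p => Nat.iter m a (Nat.iter n ai p)).
    split; [exists m, n; reflexivity|].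
    split; intros p; rewrite Hg.
    + rewrite (proj1 (Hpow n a_ai)), (proj2 (Hpow m a_ai)); reflexivity.
    + rewrite (proj1 (Hpow m a_ai)), (proj2 (Hpow n a_ai)); reflexivity.
Qed.

(* [a^n a^-m = a^r (a^N)^q (a^-N)^m] with [r, q] the division of [n + (N-1) m] by [N] *)
Lemma power_stabilizer_finite_index (J : pset D) N : (1 <= N)%nat ->
  image (Nat.iter N a) J = J -> finite_index (stabilizer (cyclic a) J) (cyclic a).
Proof.
  intros HN Ha.
  assert (Hai : image (Nat.iter N ai) J = J).
  { rewrite <- Ha at 1. apply image_inverse, iter_are_inverse, a_ai. }
  assert (cyclic_ai : forall n, cyclic a (Nat.iter n ai)).
  { intros n. apply cyclic_iter, (cyclic_inverse D a a ai (cyclic_gen D a) a_ai). }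
  exists (map (fun r => Nat.iter r a) (seq 0 N)). split.
  - intros g Hg. apply in_map_iff in Hg. destruct Hg as [r [<- _]]. apply cyclic_iter, cyclic_gen.
  - intros h Hh. destruct (cyclic_powers h Hh) as [n [m Hnm]].
    set (e := (n + (N - 1) * m)%nat).
    exists (Nat.iter (e mod N) a),
      (fun p => Nat.iter (N * (e / N)) a (Nat.iter (N * m) ai p)).
    split; [|split].
    + apply in_map_iff. exists (e mod N)%nat; split; [reflexivity|].
      apply in_seq. pose proof (Nat.mod_upper_bound e N). lia.
    + split; [exact (cyclic_comp D a _ _ (cyclic_iter D a _ _ (cyclic_gen D a)) (cyclic_ai _))|].
      rewrite image_comp, (image_ext D _ _ _ (iter_mul ai N m)), (image_iter_fixed D _ J m Hai).
      rewrite (image_ext D _ _ _ (iter_mul a N (e / N))). apply image_iter_fixed, Ha.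
    + intros p. rewrite <- Nat.iter_add, (Nat.add_comm (e mod N)), <- Nat.div_mod by lia.
      unfold e. replace (N * m)%nat with ((N - 1) * m + m)%nat by nia.
      rewrite Hnm, Nat.iter_add, (Nat.iter_add ((N - 1) * m)).
      rewrite (proj2 (iter_are_inverse D a ai _ a_ai)). reflexivity.
Qed.

Lemma stable_power_invariant (J : pset D) N : stable (cyclic a) -> subdomain J ->
  (1 <= N)%nat -> image (Nat.iter N a) J = J -> invariant (cyclic a) J.
Proof.
  intros Hst HJ HN Ha.
  apply (Hst (stabilizer (cyclic a) J)).
  - apply stabilizer_subgroup, cyclic_subgroup. exists ai; exact a_ai.
  - exact (power_stabilizer_finite_index J N HN Ha).
  - exact HJ.
  - intros k [_ Ek] p. rewrite Ek; reflexivity.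
Qed.

End Stability.

(** * Measure of subdomains *)

Section Measure.
Variable D : domain.

Fixpoint offset (k : nat) : R :=
  match k with O => 0 | S k => offset k + len D k end.

(* lay the components end to end on the real line *)
Definition embed (p : pt D) : R := offset (comp p) + coord p.

Definition embedded (S : pset D) : R -> Prop := fun x => exists p, S p /\ embed p = x.

Definition mu (S : pset D) : R := Lebesgue.lmeas (embedded S).

Lemma offset_ge0 k : (k <= ncomp D)%nat -> 0 <= offset k.
Proof.
  induction k as [|k IH]; intros Hk; simpl; [lra|].
  pose proof (len_pos D k ltac:(lia)). specialize (IH ltac:(lia)). lra.
Qed.

Lemma offset_add_len_le k k' : (k < k')%nat -> (k' <= ncomp D)%nat -> offset k + len D k <= offset k'.
Proof.
  induction k' as [|k' IH]; intros Hk Hk'; [lia|simpl].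
  destruct (Nat.eq_dec k k') as [->|Hne]; [lra|].
  pose proof (len_pos D k' ltac:(lia)). specialize (IH ltac:(lia) ltac:(lia)). lra.
Qed.

Lemma embed_inj p q : embed p = embed q -> p = q.
Proof.
  unfold embed; intros E.
  pose proof (coord_bound D p). pose proof (coord_bound D q).
  pose proof (comp_lt D p). pose proof (comp_lt D q).
  destruct (Nat.lt_total (comp p) (comp q)) as [Hlt|[Heq|Hgt]].
  - pose proof (offset_add_len_le _ _ Hlt ltac:(lia)). lra.
  - apply (pt_eq D); [exact Heq|rewrite Heq in E; lra].
  - pose proof (offset_add_len_le _ _ Hgt ltac:(lia)). lra.
Qed.

Lemma embedded_arc_union (S : pset D) : arc_union D S ->
  exists l, forall x, embedded S x <-> Lebesgue.itvs l x.
Proof.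
  intros [l0 Hl0].
  exists (map (fun kcd => (offset (fst (fst kcd)) + Rmax (snd (fst kcd)) 0,
                         offset (fst (fst kcd)) + Rmin (snd kcd) (len D (fst (fst kcd)))))
          (filter (fun kcd => Nat.ltb (fst (fst kcd)) (ncomp D)) l0)).
  intros x; split.
  - intros [p [Sp <-]]. destruct (proj1 (Hl0 p) Sp) as [[[k c] d] [Hin [Hk Hc]]]; simpl in *.
    pose proof (coord_bound D p). pose proof (comp_lt D p).
    eexists; split; [apply in_map, filter_In; split; [exact Hin|apply Nat.ltb_lt; simpl; lia]|].
    unfold Lebesgue.itv, embed; simpl; rewrite <- Hk.
    split; [apply Rplus_le_compat_l, Rmax_lub|apply Rplus_lt_compat_l, Rmin_glb_lt]; lra.
  - intros [cd [Hin Hx]]. apply in_map_iff in Hin.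
    destruct Hin as [[[k c] d] [<- Hin]]. apply filter_In in Hin. destruct Hin as [Hin Hk].
    apply Nat.ltb_lt in Hk. unfold Lebesgue.itv in Hx; simpl in *.
    pose proof (Rmax_l c 0). pose proof (Rmax_r c 0).
    pose proof (Rmin_l d (len D k)). pose proof (Rmin_r d (len D k)).
    assert (Hy : 0 <= x - offset k < len D k) by lra.
    exists (mkpt D k (x - offset k) Hk Hy). split; [|unfold embed; rewrite comp_mkpt, coord_mkpt; lra].
    apply Hl0. exists (k, c, d). rewrite comp_mkpt, coord_mkpt. simpl. repeat split; auto; lra.
Qed.

Lemma arc_union_or (S T : pset D) : arc_union D S -> arc_union D T -> arc_union D (fun p => S p \/ T p).
Proof.
  intros [l1 H1] [l2 H2]. exists (l1 ++ l2). intros p. rewrite H1, H2. split.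
  - intros [[kcd [Hin Hk]]|[kcd [Hin Hk]]]; exists kcd; split; auto; apply in_or_app; auto.
  - intros [kcd [Hin Hk]]. apply in_app_or in Hin. destruct Hin; [left|right]; exists kcd; auto.
Qed.

Lemma mu_or_disjoint (S T : pset D) : arc_union D S -> arc_union D T -> disjoint S T ->
  mu (fun p => S p \/ T p) = mu S + mu T.
Proof.
  intros HS HT Hd.
  destruct (embedded_arc_union S HS) as [l1 H1], (embedded_arc_union T HT) as [l2 H2].
  unfold mu. rewrite (Lebesgue.lmeas_ext _ _ H1), (Lebesgue.lmeas_ext _ _ H2), <- Lebesgue.lmeas_itvs_app_disjoint.
  - apply Lebesgue.lmeas_ext. intros x. rewrite Lebesgue.in_itvs_app, <- H1, <- H2. split.
    + intros [p [[Sp|Tp] <-]]; [left|right]; exists p; auto.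
    + intros [[p [Sp <-]]|[p [Tp <-]]]; exists p; auto.
  - intros x [Hx1 Hx2]. apply H1 in Hx1. apply H2 in Hx2.
    destruct Hx1 as [p [Sp <-]], Hx2 as [q [Tq E]].
    apply embed_inj in E. subst q. apply (Hd p); auto.
Qed.

Lemma mu_empty : mu (fun _ => False) = 0.
Proof.
  unfold mu. rewrite <- Lebesgue.lmeas_itvs_nil. apply Lebesgue.lmeas_ext.
  intros x; split; [intros [p [[] _]]|intros [cd [[] _]]].
Qed.

Lemma mu_le_total (S : pset D) : arc_union D S -> mu S <= offset (ncomp D).
Proof.
  intros HS. destruct (embedded_arc_union S HS) as [l Hl].
  pose proof (offset_add_len_le 0 (ncomp D) (ncomp_pos D) ltac:(lia)) as Htot.
  pose proof (len_pos D 0 (ncomp_pos D)). simpl in Htot.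
  unfold mu. rewrite (Lebesgue.lmeas_ext _ _ Hl).
  replace (offset (ncomp D)) with (offset (ncomp D) - 0) by lra.
  rewrite <- Lebesgue.lmeas_itvs_single by lra. apply Lebesgue.lmeas_itvs_le.
  intros x Hx. apply Hl in Hx. destruct Hx as [p [_ <-]].
  exists (0, offset (ncomp D)); split; [left; reflexivity|].
  pose proof (coord_bound D p). pose proof (comp_lt D p).
  pose proof (offset_ge0 (comp p) ltac:(lia)). pose proof (offset_add_len_le (comp p) (ncomp D) ltac:(lia) ltac:(lia)).
  unfold Lebesgue.itv, embed; simpl; lra.
Qed.

Lemma mu_pos (S : pset D) : arc_union D S -> (exists p, S p) -> 0 < mu S.
Proof.
  intros HS [p Sp].
  destruct (arc_union_right_nbhd D S p HS Sp) as [d [Hd [Hdl HSd]]].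
  destruct (embedded_arc_union S HS) as [l Hl].
  unfold mu. rewrite (Lebesgue.lmeas_ext _ _ Hl).
  apply Rlt_le_trans with (embed p + d - embed p); [lra|].
  rewrite <- Lebesgue.lmeas_itvs_single by lra. apply Lebesgue.lmeas_itvs_le.
  intros x [cd [[<-|[]] Hx]]. unfold Lebesgue.itv in Hx; simpl in Hx.
  pose proof (coord_bound D p).
  unfold embed in *.
  assert (Hy : 0 <= x - offset (comp p) < len D (comp p)) by lra.
  apply Hl. exists (mkpt D (comp p) _ (comp_lt D p) Hy).
  unfold embed. rewrite comp_mkpt, coord_mkpt. split; [|lra].
  apply HSd; rewrite ?comp_mkpt, ?coord_mkpt; [reflexivity|lra].
Qed.

Lemma mu_translate (S : pset D) g t : arc_union D S ->
  (forall p, S p -> embed (g p) = embed p + t) -> mu (image g S) = mu S.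
Proof.
  intros HS Hg. destruct (embedded_arc_union S HS) as [l Hl].
  unfold mu. rewrite (Lebesgue.lmeas_ext (embedded S) _ Hl), <- (Lebesgue.lmeas_itvs_shift t).
  apply Lebesgue.lmeas_ext. intros x; split.
  - intros [q [[p [Sp ->]] <-]]. rewrite (Hg p Sp).
    destruct (proj1 (Hl (embed p)) (ex_intro _ p (conj Sp eq_refl))) as [cd [Hin Hcd]].
    exists (Lebesgue.itv_shift t cd). split; [apply in_map, Hin|].
    unfold Lebesgue.itv, Lebesgue.itv_shift in *; simpl; lra.
  - intros [cd' [Hin Hx]]. apply in_map_iff in Hin. destruct Hin as [cd [<- Hin]].
    assert (Hy : Lebesgue.itvs l (x - t)) by (exists cd; unfold Lebesgue.itv, Lebesgue.itv_shift in *; simpl in *; split; [exact Hin|lra]).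
    apply Hl in Hy. destruct Hy as [p [Sp Hp]].
    exists (g p). split; [exists p; auto|]. rewrite (Hg p Sp); lra.
Qed.

End Measure.

(** * Interval exchanges preserve measure *)

Lemma Int_part_le r1 r2 : r1 <= r2 -> (Int_part r1 <= Int_part r2)%Z.
Proof.
  intros H. destruct (base_Int_part r1), (base_Int_part r2).
  assert (IZR (Int_part r1) < IZR (Int_part r2 + 1)) by (rewrite plus_IZR; simpl; lra).
  apply lt_IZR in H4. lia.
Qed.

Lemma Int_part_div_bounds x L : 0 < L ->
  IZR (Int_part (x / L)) * L <= x < (IZR (Int_part (x / L)) + 1) * L.
Proof.
  intros HL. assert (Hx : x = x / L * L) by (field; lra).
  destruct (base_Int_part (x / L)) as [H1 H2].
  set (y := x / L) in *. rewrite Hx.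
  split; [apply Rmult_le_compat_r|apply Rmult_lt_compat_r]; lra.
Qed.

Lemma Int_part_div x L n : 0 < L -> IZR n * L <= x < (IZR n + 1) * L -> Int_part (x / L) = n.
Proof.
  intros HL Hn. symmetry. apply Int_part_spec.
  assert (Hx : x = x / L * L) by (field; lra).
  set (y := x / L) in *. rewrite Hx in Hn.
  split; [apply (Rmult_lt_reg_r L)|apply (Rmult_le_reg_r L)]; nra.
Qed.

Definition zrange (a b : Z) : list Z :=
  map (fun i => (a + Z.of_nat i)%Z) (seq 0 (Z.to_nat (b - a + 1))).

Lemma in_zrange a b n : (a <= n <= b)%Z -> In n (zrange a b).
Proof. intros H. apply in_map_iff. exists (Z.to_nat (n - a)). split; [lia|]. apply in_seq. lia. Qed.

Section TranslationPieces.
Variable D : domain.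

Definition translates (g : pt D -> pt D) (P : piece) : Prop :=
  forall p, in_piece P p -> comp (g p) = tgt P /\ coord (g p) = coord p + shift P.

(* cut a piece of an IET landing on a circle into the parts that wrap around a given number of times *)
Definition unwrap_piece (P : piece) : list piece :=
  if circ D (tgt P) then
    map (fun n => Build_piece (src P) (Rmax (lo P) (IZR n * len D (tgt P) - shift P))
                    (Rmin (hi P) ((IZR n + 1) * len D (tgt P) - shift P)) (tgt P)
                    (shift P - IZR n * len D (tgt P)))
        (zrange (Int_part (shift P / len D (tgt P)))
                (Int_part ((len D (src P) + shift P) / len D (tgt P))))
  else P :: nil.

Lemma unwrap_piece_translates (g : pt D -> pt D) P :
  (forall p, in_piece P p -> comp (g p) = tgt P /\ coord (g p) = wrap D (tgt P) (coord p + shift P)) ->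
  forall Q, In Q (unwrap_piece P) -> translates g Q.
Proof.
  intros Hg Q. unfold unwrap_piece. destruct (circ D (tgt P)) eqn:Ecirc.
  - intros HQ. apply in_map_iff in HQ. destruct HQ as [n [<- _]].
    intros p [Hk Hb]; simpl in *.
    pose proof (Rmax_l (lo P) (IZR n * len D (tgt P) - shift P)).
    pose proof (Rmax_r (lo P) (IZR n * len D (tgt P) - shift P)).
    pose proof (Rmin_l (hi P) ((IZR n + 1) * len D (tgt P) - shift P)).
    pose proof (Rmin_r (hi P) ((IZR n + 1) * len D (tgt P) - shift P)).
    destruct (Hg p) as [Hc Hco]; [split; [exact Hk|lra]|].
    assert (HL : 0 < len D (tgt P)) by (apply len_pos; rewrite <- Hc; apply comp_lt).
    split; [exact Hc|]. unfold wrap in Hco. rewrite Ecirc, (Int_part_div _ _ n HL) in Hco; lra.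
  - intros [<-|[]] p Hp. unfold wrap in Hg. rewrite Ecirc in Hg. exact (Hg p Hp).
Qed.

Lemma unwrap_piece_covers P (p : pt D) : in_piece P p ->
  (circ D (tgt P) = true -> 0 < len D (tgt P)) ->
  exists Q, In Q (unwrap_piece P) /\ in_piece Q p.
Proof.
  intros [Hk Hb] HL. unfold unwrap_piece. destruct (circ D (tgt P)).
  - specialize (HL eq_refl).
    set (x := coord p + shift P). set (n := Int_part (x / len D (tgt P))).
    pose proof (Int_part_div_bounds x _ HL) as Hn. fold n in Hn.
    pose proof (coord_bound D p) as Hp. rewrite Hk in Hp.
    eexists; split.
    + apply (in_map _ _ n). apply in_zrange. unfold n, x.
      assert (0 <= / len D (tgt P)) by (left; apply Rinv_0_lt_compat, HL).
      split; apply Int_part_le; unfold Rdiv; apply Rmult_le_compat_r; lra.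
    + split; [exact Hk|]. simpl. unfold x in Hn.
      split; [apply Rmax_lub|apply Rmin_glb_lt]; lra.
  - exists P; split; [left; reflexivity|split; assumption].
Qed.

Lemma IET_translation_pieces (g : pt D -> pt D) : is_IET g ->
  exists Ps, (forall P, In P Ps -> translates g P) /\ forall p : pt D, exists P, In P Ps /\ in_piece P p.
Proof.
  intros [_ [pcs [Hcov Hform]]]. exists (flat_map unwrap_piece pcs). split.
  - intros Q HQ. apply in_flat_map in HQ. destruct HQ as [P [HP HQ]].
    exact (unwrap_piece_translates g P (Hform P HP) Q HQ).
  - intros p. destruct (Hcov p) as [P [HP Hp]].
    destruct (unwrap_piece_covers P p Hp) as [Q [HQ Hq]].
    + intros _. apply len_pos. rewrite <- (proj1 (Hform P HP p Hp)). apply comp_lt.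
    + exists Q. split; [apply in_flat_map; exists P|]; auto.
Qed.

Lemma arc_union_inter_piece (S : pset D) P : arc_union D S ->
  arc_union D (fun p => S p /\ in_piece P p).
Proof.
  intros [l Hl].
  exists (map (fun kcd => (src P, Rmax (snd (fst kcd)) (lo P), Rmin (snd kcd) (hi P)))
            (filter (fun kcd => Nat.eqb (fst (fst kcd)) (src P)) l)).
  intros p. rewrite Hl. split.
  - intros [[[[k c] d] [Hin [Hk Hc]]] [Hp Hb]]; simpl in *.
    eexists; split; [apply in_map, filter_In; split; [exact Hin|apply Nat.eqb_eq; simpl; congruence]|].
    simpl. split; [exact Hp|]. split; [apply Rmax_lub|apply Rmin_glb_lt]; lra.
  - intros [kcd' [Hin [Hk Hc]]]. apply in_map_iff in Hin. destruct Hin as [[[k c] d] [<- Hin]].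
    apply filter_In in Hin. destruct Hin as [Hin Hkeq]. apply Nat.eqb_eq in Hkeq. simpl in *.
    pose proof (Rmax_l c (lo P)). pose proof (Rmax_r c (lo P)).
    pose proof (Rmin_l d (hi P)). pose proof (Rmin_r d (hi P)).
    split; [exists (k, c, d); simpl; repeat split; auto; try congruence; lra|split; [exact Hk|lra]].
Qed.

Lemma arc_union_diff_piece (S : pset D) P : arc_union D S ->
  arc_union D (fun p => S p /\ ~ in_piece P p).
Proof.
  intros [l Hl].
  exists (flat_map (fun kcd =>
            if Nat.eqb (fst (fst kcd)) (src P)
            then (fst (fst kcd), snd (fst kcd), Rmin (snd kcd) (lo P))
                   :: (fst (fst kcd), Rmax (snd (fst kcd)) (hi P), snd kcd) :: nil
            else kcd :: nil) l).
  intros p. rewrite Hl. split.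
  - intros [[[[k c] d] [Hin [Hk Hc]]] Hn]; simpl in *.
    destruct (Nat.eqb k (src P)) eqn:E.
    + apply Nat.eqb_eq in E. rewrite E in Hin, Hk.
      assert (Hout : coord p < lo P \/ hi P <= coord p)
        by (apply NNPP; intros H; apply Hn; split; [exact Hk|lra]).
      destruct Hout as [Hlo|Hhi].
      * exists (src P, c, Rmin d (lo P)).
        split; [apply in_flat_map; exists (src P, c, d); split; [exact Hin|]|].
        { simpl. rewrite Nat.eqb_refl. left; reflexivity. }
        simpl. split; [exact Hk|split; [lra|apply Rmin_glb_lt; lra]].
      * exists (src P, Rmax c (hi P), d).
        split; [apply in_flat_map; exists (src P, c, d); split; [exact Hin|]|].
        { simpl. rewrite Nat.eqb_refl. right; left; reflexivity. }
        simpl. split; [exact Hk|split; [apply Rmax_lub; lra|lra]].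
    + exists (k, c, d). split; [apply in_flat_map; exists (k, c, d); simpl; rewrite E|]; simpl; auto.
  - intros [kcd' [Hm [Hk Hc]]]. apply in_flat_map in Hm.
    destruct Hm as [[[k c] d] [Hkcd Hin']]. simpl in Hin'.
    pose proof (Rmax_l c (hi P)). pose proof (Rmax_r c (hi P)).
    pose proof (Rmin_l d (lo P)). pose proof (Rmin_r d (lo P)).
    destruct (Nat.eqb k (src P)) eqn:E.
    + apply Nat.eqb_eq in E.
      destruct Hin' as [<-|[<-|[]]]; simpl in *;
        (split; [exists (k, c, d); simpl; repeat split; auto; lra|intros [_ Hb]; lra]).
    + apply Nat.eqb_neq in E. destruct Hin' as [<-|[]]; simpl in *.
      split; [exists (k, c, d); auto|intros [Hkp _]; congruence].
Qed.

Variable g : pt D -> pt D.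

Lemma image_piece_arc_union (S : pset D) P : translates g P -> arc_union D S ->
  (forall p, S p -> in_piece P p) -> arc_union D (image g S).
Proof.
  intros Hg [l Hl] HSP.
  destruct (classic (exists p, S p)) as [[p0 Sp0]|Hne].
  2: { exists nil. intros q; split; [intros [p [Sp _]]; exfalso; eauto|intros [kcd [[] _]]]. }
  assert (Hk : (src P < ncomp D)%nat) by (rewrite <- (proj1 (HSP p0 Sp0)); apply comp_lt).
  exists (map (fun kcd => (tgt P, Rmax (snd (fst kcd)) 0 + shift P, Rmin (snd kcd) (len D (src P)) + shift P))
            (filter (fun kcd => Nat.eqb (fst (fst kcd)) (src P)) l)).
  intros q; split.
  - intros [p [Sp ->]]. destruct (HSP p Sp) as [Hp Hpb]. destruct (Hg p (HSP p Sp)) as [Hc Hco].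
    destruct (proj1 (Hl p) Sp) as [[[k c] d] [Hin [Hkp Hc']]]; simpl in *.
    pose proof (coord_bound D p). rewrite Hp in *.
    eexists; split; [apply in_map, filter_In; split; [exact Hin|apply Nat.eqb_eq; simpl; congruence]|].
    simpl. rewrite Hc, Hco. split; [reflexivity|].
    split; [apply Rplus_le_compat_r, Rmax_lub|apply Rplus_lt_compat_r, Rmin_glb_lt]; lra.
  - intros [kcd' [Hin [Hkq Hb]]]. apply in_map_iff in Hin. destruct Hin as [[[k c] d] [<- Hin]].
    apply filter_In in Hin. destruct Hin as [Hin Hkeq]. apply Nat.eqb_eq in Hkeq. simpl in *.
    pose proof (Rmax_l c 0). pose proof (Rmax_r c 0).
    pose proof (Rmin_l d (len D (src P))). pose proof (Rmin_r d (len D (src P))).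
    assert (Hy : 0 <= coord q - shift P < len D (src P)) by lra.
    set (p := mkpt D (src P) (coord q - shift P) Hk Hy).
    assert (Sp : S p) by (apply Hl; exists (k, c, d); unfold p; rewrite comp_mkpt, coord_mkpt; simpl; repeat split; auto; lra).
    exists p. split; [exact Sp|]. destruct (Hg p (HSP p Sp)) as [Hc Hco].
    apply (pt_eq D); [congruence|]. rewrite Hco. unfold p. rewrite coord_mkpt. lra.
Qed.

Lemma image_piece_measure (S : pset D) P : translates g P -> arc_union D S ->
  (forall p, S p -> in_piece P p) -> mu D (image g S) = mu D S.
Proof.
  intros Hg HS HSP. apply (mu_translate D S g (offset D (tgt P) - offset D (src P) + shift P) HS).
  intros p Sp. destruct (HSP p Sp) as [Hp _]. destruct (Hg p (HSP p Sp)) as [Hc Hco].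
  unfold embed. rewrite Hc, Hco, Hp. lra.
Qed.

Hypothesis g_inj : forall x y, g x = g y -> x = y.

Lemma translation_pieces_image Ps : (forall P, In P Ps -> translates g P) ->
  forall S, arc_union D S -> (forall p, S p -> exists P, In P Ps /\ in_piece P p) ->
  arc_union D (image g S) /\ mu D (image g S) = mu D S.
Proof.
  intros HPs. induction Ps as [|P Ps IH]; intros S HS Hcov.
  - replace (image g S) with S; [auto|].
    apply pset_ext; intros p; split; [intros Sp|intros [q [Sq _]]];
      exfalso; [destruct (Hcov p Sp) as [? [[] _]]|destruct (Hcov q Sq) as [? [[] _]]].
  - set (S1 := fun p => S p /\ in_piece P p). set (S2 := fun p => S p /\ ~ in_piece P p).
    assert (A1 : arc_union D S1) by (apply arc_union_inter_piece, HS).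
    assert (A2 : arc_union D S2) by (apply arc_union_diff_piece, HS).
    assert (HP : translates g P) by (apply HPs; left; reflexivity).
    assert (HS1 : forall p, S1 p -> in_piece P p) by (intros p [_ H]; exact H).
    destruct (IH (fun Q HQ => HPs Q (or_intror HQ)) S2 A2) as [B2 M2].
    { intros p [Sp Hn]. destruct (Hcov p Sp) as [Q [[<-|HQ] HQp]]; [contradiction|eauto]. }
    assert (ES : S = fun p => S1 p \/ S2 p).
    { apply pset_ext; intros p. unfold S1, S2. destruct (classic (in_piece P p)); tauto. }
    assert (Eg : image g S = fun p => image g S1 p \/ image g S2 p).
    { apply pset_ext; intros p. rewrite ES at 1. split.
      - intros [q [[S1q|S2q] ->]]; [left|right]; exists q; auto.
      - intros [[q [Sq ->]]|[q [Sq ->]]]; exists q; auto. }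
    assert (Hd : disjoint S1 S2) by (intros p [[_ H1] [_ H2]]; contradiction).
    assert (Hdg : disjoint (image g S1) (image g S2)).
    { intros p [[q1 [[_ H1] ->]] [q2 [[_ H2] E]]]. apply g_inj in E. subst q2. contradiction. }
    assert (B1 : arc_union D (image g S1)) by (apply (image_piece_arc_union S1 P); assumption).
    rewrite Eg. split; [apply arc_union_or; assumption|].
    rewrite (mu_or_disjoint D _ _ B1 B2 Hdg), M2, (image_piece_measure S1 P HP A1 HS1).
    rewrite <- (mu_or_disjoint D S1 S2 A1 A2 Hd), <- ES. reflexivity.
Qed.

End TranslationPieces.

Lemma IET_image {D} (g : pt D -> pt D) (S : pset D) : is_IET g -> arc_union D S ->
  arc_union D (image g S) /\ mu D (image g S) = mu D S.
Proof.
  intros Hg HS. destruct (IET_translation_pieces D g Hg) as [Ps [HPs Hcov]].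
  apply (translation_pieces_image D g (bij_inj D g (proj1 Hg)) Ps HPs S HS).
  intros p _; apply Hcov.
Qed.

(** * Images of a component *)

Section Conjugation.
Variable D : domain.
Variable G : (pt D -> pt D) -> Prop.
Variable a : pt D -> pt D.
Variable Is : list (pset D).
Hypothesis G_subgroup : is_subgroup G.
Hypothesis G_IET : forall g, G g -> is_IET g.
Hypothesis G_a : G a.
Hypothesis a_stable : stable (cyclic a).
Hypothesis Is_components : irreducible_components (cyclic a) Is.
Hypothesis conjugates_commute : forall g ginv, G g ->
  (forall p, ginv (g p) = p) -> (forall p, g (ginv p) = p) ->
  forall p, g (a (ginv (a p))) = a (g (a (ginv p))).

Lemma G_inverse g : G g -> exists gi, G gi /\ are_inverse D g gi.
Proof. intros Gg. destruct (proj2 (proj2 G_subgroup) g Gg) as [gi [Ggi Hinv]]. exists gi; auto. Qed.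

Lemma G_comp g h : G g -> G h -> G (fun p => g (h p)).
Proof. apply G_subgroup. Qed.

Lemma G_image_arc_union g S : G g -> arc_union D S -> arc_union D (image g S).
Proof. intros Gg HS. apply (IET_image g S (G_IET g Gg) HS). Qed.

Lemma G_image_mu g S : G g -> arc_union D S -> mu D (image g S) = mu D S.
Proof. intros Gg HS. apply (IET_image g S (G_IET g Gg) HS). Qed.

Lemma G_image_component_arc_union g I : G g -> In I Is -> arc_union D (image g I).
Proof. intros Gg HI. apply G_image_arc_union, (component_arc_union D a Is Is_components I HI); exact Gg. Qed.

Lemma image_component_subdomain g I : G g -> In I Is -> subdomain (image g I).
Proof.
  intros Gg HI. destruct (component_subdomain D a Is Is_components I HI) as [[q Iq] AI].
  split; [exists (g q), q; auto|apply G_image_component_arc_union; assumption].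
Qed.

Lemma image_component_invariant f I : G f -> In I Is -> invariant (cyclic a) (image f I).
Proof.
  intros Gf HI.
  destruct (G_inverse f Gf) as [fi [Gfi Hf]], (G_inverse a G_a) as [ai [Gai Ha]].
  set (c := fun p => fi (a (f p))). set (ci := fun p => fi (ai (f p))).
  assert (Gc : G c) by exact (G_comp _ _ Gfi (G_comp _ _ G_a Gf)).
  assert (Gci : G ci) by exact (G_comp _ _ Gfi (G_comp _ _ Gai Gf)).
  assert (Hc : are_inverse D c ci).
  { destruct Hf as [F1 F2], Ha as [A1 A2]. split; intros p; unfold c, ci; rewrite F2; [rewrite A1|rewrite A2]; auto. }
  assert (c_commutes : forall p, a (c p) = c (a p)).
  { intros p. symmetry. exact (conjugates_commute fi f Gfi (proj2 Hf) (proj1 Hf) p). }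
  destruct (commuting_map_power_fixes_component D a (are_inverse_bij D _ _ Ha) Is Is_components
              c ci Hc c_commutes (fun J => G_image_component_arc_union c J Gc)
              (fun J => G_image_component_arc_union ci J Gci) I HI) as [n [Hn Hcn]].
  apply (stable_power_invariant D a ai Ha (image f I) n a_stable); auto using image_component_subdomain.
  rewrite <- image_comp, (image_ext D _ (fun p => f (Nat.iter n c p))), image_comp, Hcn; [reflexivity|].
  intros p. unfold c. rewrite (iter_conjugate D f fi a n Hf). symmetry. apply (proj2 Hf).
Qed.

Lemma image_component_eq_or_disjoint g h I : G g -> G h -> In I Is ->
  image g I = image h I \/ disjoint (image g I) (image h I).
Proof.
  intros Gg Gh HI.
  destruct (classic (exists p, image g I p /\ image h I p)) as [[p [[x [Ix ->]] [y [Iy Ey]]]]|Hno].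
  2: { right. intros p Hp. apply Hno. exists p; exact Hp. }
  left.
  destruct (G_inverse g Gg) as [gi [Ggi [G1 G2]]], (G_inverse h Gh) as [hi [Ghi [H1 H2]]].
  set (F := fun p => hi (g p)). set (Fi := fun p => gi (h p)).
  assert (GF : G F) by exact (G_comp _ _ Ghi Gg).
  assert (GFi : G Fi) by exact (G_comp _ _ Ggi Gh).
  assert (HF : are_inverse D F Fi) by (split; intros q; unfold F, Fi; [rewrite H2, G1|rewrite G2, H1]; reflexivity).
  assert (HFI : image F I = I).
  { destruct (G_inverse a G_a) as [ai [_ Ha]].
    apply (invariant_images_meeting_eq D a (are_inverse_bij D _ _ Ha) Is Is_components F Fi I I HF HI HI);
      auto using G_image_component_arc_union, image_component_invariant.
    exists y; split; [exists x; split; [exact Ix|]|exact Iy]. unfold F. rewrite Ey, H1; reflexivity. }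
  rewrite <- HFI at 2. rewrite <- image_comp. apply image_ext. intros q; unfold F; rewrite H2; reflexivity.
Qed.

Definition images_union (I : pset D) (gs : list (pt D -> pt D)) : pset D :=
  fun p => exists h, In h gs /\ image h I p.

Lemma images_union_cons I g gs :
  images_union I (g :: gs) = fun p => image g I p \/ images_union I gs p.
Proof.
  apply pset_ext; intros p; split.
  - intros [h [[<-|Hh] Hp]]; [left|right; exists h]; auto.
  - intros [Hp|[h [Hh Hp]]]; [exists g|exists h]; simpl; auto.
Qed.

Lemma new_image_disjoint I g gs : In I Is -> G g -> (forall h, In h gs -> G h) ->
  (forall h, In h gs -> image g I <> image h I) -> disjoint (image g I) (images_union I gs).
Proof.
  intros HI Gg Hgs Hnew p [Hp [h [Hh Hhp]]].
  destruct (image_component_eq_or_disjoint g h I Gg (Hgs h Hh) HI) as [E|E].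
  - exact (Hnew h Hh E).
  - exact (E p (conj Hp Hhp)).
Qed.

Lemma infinitely_many_images_measure I : In I Is ->
  ~ (exists L, forall g, G g -> exists S, In S L /\ seteq (image g I) S) ->
  forall j, exists gs, (forall h, In h gs -> G h) /\
    arc_union D (images_union I gs) /\ mu D (images_union I gs) = INR j * mu D I.
Proof.
  intros HI Hinf j. induction j as [|j [gs [Hgs [A M]]]].
  - exists nil. assert (E : images_union I nil = fun _ => False).
    { apply pset_ext; intros p; split; [intros [h [[] _]]|intros []]. }
    rewrite E, mu_empty. split; [intros h []|split; [|simpl; lra]].
    exists nil; intros p; split; [intros []|intros [kcd [[] _]]].
  - assert (Hnew : exists g, G g /\ forall h, In h gs -> image g I <> image h I).
    { apply NNPP; intros Hno. apply Hinf. exists (map (fun h => image h I) gs). intros g Gg.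
      apply NNPP; intros Hg. apply Hno. exists g; split; [exact Gg|]. intros h Hh E.
      apply Hg. exists (image h I); split; [apply in_map_iff; exists h; auto|rewrite E; intros p; tauto]. }
    destruct Hnew as [g [Gg Hg]].
    assert (Ag : arc_union D (image g I)) by (apply G_image_component_arc_union; assumption).
    exists (g :: gs). rewrite images_union_cons.
    split; [intros h [<-|Hh]; auto|split; [apply arc_union_or; assumption|]].
    rewrite mu_or_disjoint, M, G_image_mu, S_INR; auto; [lra| |].
    + apply (component_arc_union D a Is Is_components I HI).
    + apply new_image_disjoint; assumption.
Qed.

Lemma finitely_many_images I : In I Is ->
  exists L, forall g, G g -> exists S, In S L /\ seteq (image g I) S.
Proof.
  intros HI. apply NNPP; intros Hinf.
  destruct (component_subdomain D a Is Is_components I HI) as [NI AI].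
  pose proof (mu_pos D I AI NI).
  destruct (INR_unbounded (offset D (ncomp D) / mu D I)) as [M HM].
  destruct (infinitely_many_images_measure I HI Hinf M) as [gs [_ [A HmuM]]].
  pose proof (mu_le_total D _ A) as Htot. rewrite HmuM in Htot.
  assert (offset D (ncomp D) / mu D I * mu D I = offset D (ncomp D)) by (field; lra).
  assert (offset D (ncomp D) / mu D I * mu D I < INR M * mu D I) by (apply Rmult_lt_compat_r; lra).
  lra.
Qed.

End Conjugation.

Theorem mainTheorem12 (D : domain) (G : (pt D -> pt D) -> Prop)
  (a : pt D -> pt D) (Is : list (pset D)) :
  is_subgroup G ->
  (forall g, G g -> is_IET g) ->
  G a ->
  stable (cyclic a) ->
  irreducible_components (cyclic a) Is ->
  (forall g ginv, G g -> (forall p, ginv (g p) = p) -> (forall p, g (ginv p) = p) ->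
     forall p, g (a (ginv (a p))) = a (g (a (ginv p)))) ->
  forall I, In I Is ->
    (exists L : list (pset D), forall g, G g -> exists S, In S L /\ seteq (image g I) S) /\
    (forall g, G g -> subdomain (image g I)) /\
    (forall g h, G g -> G h ->
       seteq (image g I) (image h I) \/ disjoint (image g I) (image h I)).
Proof.
  intros HG HIET Ha Hst Hcomp Hcm I HI.
  split; [|split].
  - exact (finitely_many_images D G a Is HG HIET Ha Hst Hcomp Hcm I HI).
  - intros g Gg. exact (image_component_subdomain D G a Is HIET Hcomp g I Gg HI).
  - intros g h Gg Gh.
    destruct (image_component_eq_or_disjoint D G a Is HG HIET Ha Hst Hcomp Hcm g h I Gg Gh HI) as [E|E].
    + left. rewrite E. intros p; tauto.
    + right. exact E.
Qed.
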